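(* Let $m\ge3$ be odd and $n\ge2$. The $m$th order $n$-dimensional Hilbert tensor $\mathcal{A}=(a_{i_1\dots i_m})$, $a_{i_1\dots i_m}=\frac{1}{i_1+\cdots+i_m-m+1}$ for $i_1,\dots,i_m\in\{1,\dots,n\}$, is strongly positive definite.
   Context: For $\mathbf{x}\in\mathbb{R}^n$, $\mathcal{A}\mathbf{x}^{m-1}$ is the vector with $i$th component $\sum_{i_2,\dots,i_m}a_{ii_2\dots i_m}x_{i_2}\cdots x_{i_m}$. For odd $m$ and symmetric $\mathcal{A}$, $\mathcal{A}$ is strongly positive definite if $\mathcal{A}\mathbf{x}^{m-1}>\mathbf{0}$ componentwise for all nonzero $\mathbf{x}\in\mathbb{R}^n$. *)

From mathcomp Require Import all_boot all_order all_fingroup all_algebra.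
From mathcomp Require Import reals.
Set Implicit Arguments. Unset Strict Implicit. Unset Printing Implicit Defensive.
Import Order.TTheory GRing.Theory Num.Theory.
Local Open Scope ring_scope.

(* An m-th order n-dimensional real tensor: a function of index tuples
   (i_1,...,i_m), encoded as finite functions 'I_m -> 'I_n (0-based). *)
Definition tensor (R : Type) (m n : nat) := {ffun 'I_m -> 'I_n} -> R.

Definition symmetric_tensor (R : Type) (m n : nat) (A : tensor R m n) : Prop :=
  forall (s : {perm 'I_m}) (idx : {ffun 'I_m -> 'I_n}),
    A [ffun k => idx (s k)] = A idx.

(* (A x^{m-1})_i = sum_{i_2..i_m} a_{i i_2 .. i_m} x_{i_2} ... x_{i_m}:
   sum over index tuples whose first entry (position 0) equals i, with the
   product of x over the remaining positions. *)
Definition tensor_apply (R : numDomainType) (m n : nat) (A : tensor R m n)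
  (x : 'I_n -> R) (i : 'I_n) : R :=
  \sum_(idx : {ffun 'I_m -> 'I_n} |
         [forall k : 'I_m, (val k == 0%N) ==> (idx k == i)])
     A idx * \prod_(k : 'I_m | val k != 0%N) x (idx k).

Definition strongly_positive_definite (R : numDomainType) (m n : nat)
  (A : tensor R m n) : Prop :=
  forall x : 'I_n -> R, (exists j, x j != 0) ->
    forall i : 'I_n, 0 < tensor_apply A x i.

(* Hilbert tensor: a_{i_1..i_m} = 1/(i_1+...+i_m - m + 1) with 1-based
   indices; with 0-based indices this is 1/(sum of indices + 1). *)
Definition hilbert_tensor (R : numFieldType) (m n : nat) : tensor R m n :=
  fun idx => ((\sum_(k : 'I_m) val (idx k)).+1%:R)^-1.

From mathcomp Require Import all_boot all_order all_fingroup all_algebra.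
From mathcomp Require Import reals polyrcf.
Set Implicit Arguments. Unset Strict Implicit. Unset Printing Implicit Defensive.
Import Order.TTheory GRing.Theory Num.Theory.
Local Open Scope ring_scope.

(* Since 1/(s+1) is the integral of t^s over [0, 1], expanding the product
   (with 0-based indices and p(t) = x_0 + x_1 t + ... + x_(n-1) t^(n-1))
   gives (A x^(m-1))_i = integral over [0, 1] of t^i p(t)^(m-1).  As m - 1
   is even the integrand is nonnegative on [0, 1], and it is a nonzero
   polynomial when x is nonzero.  The integral of such a polynomial is
   positive: its antiderivative Q is nondecreasing on [0, 1], and Q(1) = Q(0)
   would make Q vanish on all of [0, 1], hence Q = 0 and so Q' = 0. *)

Section Integral01.
Variable R : numFieldType.
Implicit Types (p q : {poly R}).

Definition integral01 q : R := \sum_(k < size q) q`_k / k.+1%:R.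

Lemma integral01_widen q N :
  (size q <= N)%N -> integral01 q = \sum_(k < N) q`_k / k.+1%:R.
Proof.
move=> le_qN; rewrite /integral01 (big_ord_widen N (fun k => q`_k / k.+1%:R)) //.
rewrite big_mkcond; apply: eq_bigr => k _ /=.
by case: ltnP => // ?; rewrite nth_default ?mul0r.
Qed.

Lemma integral01_0 : integral01 0 = 0.
Proof. by rewrite /integral01 size_poly0 big_ord0. Qed.

Lemma integral01D p q : integral01 (p + q) = integral01 p + integral01 q.
Proof.
pose N := maxn (size p) (size q).
rewrite !(@integral01_widen _ N) ?leq_maxl ?leq_maxr ?size_polyD // -big_split.
by apply: eq_bigr => k _; rewrite coefD mulrDl.
Qed.

Lemma integral01_sum (I : Type) (r : seq I) (P : pred I) (F : I -> {poly R}) :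
  integral01 (\sum_(i <- r | P i) F i) = \sum_(i <- r | P i) integral01 (F i).
Proof. exact: (big_morph _ integral01D integral01_0). Qed.

Lemma integral01_scaleXn (c : R) e : integral01 (c *: 'X^e) = c / e.+1%:R.
Proof.
rewrite (@integral01_widen _ e.+1); last first.
  by rewrite (leq_trans (size_scale_leq _ _)) ?size_polyXn.
rewrite big_ord_recr /= coefZ coefXn eqxx mulr1 big1 ?add0r // => k _.
by rewrite coefZ coefXn ltn_eqF // mulr0 mul0r.
Qed.

Definition antideriv q : {poly R} :=
  \poly_(k < (size q).+1) (if k is k'.+1 then q`_k' / k%:R else 0).

Lemma deriv_antideriv q : (antideriv q)^`() = q.
Proof.
apply/polyP => k; rewrite coef_deriv coef_poly ltnS.
case: ltnP => [_ | le_qk]; first by rewrite -[LHS]mulr_natr divfK ?pnatr_eq0.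
by rewrite mul0rn nth_default.
Qed.

Lemma horner_antideriv0 q : (antideriv q).[0] = 0.
Proof. by rewrite horner_coef0 coef_poly. Qed.

Lemma horner_antideriv1 q : (antideriv q).[1] = integral01 q.
Proof.
rewrite horner_poly big_ord_recl mul0r add0r.
by apply: eq_bigr => k _; rewrite expr1n mulr1.
Qed.

End Integral01.

Section Integral01Positive.
Variable R : rcfType.
Implicit Types q : {poly R}.

Lemma poly_eq0_on01 q : {in `[0, 1], forall t, q.[t] = 0} -> q = 0.
Proof.
move=> q01; apply: (@roots_geq_poly_eq0 _ _ [seq k.+1%:R^-1 | k <- iota 0 (size q)]).
- apply/allP => _ /mapP[k _ ->]; apply/rootP/q01.
  by rewrite in_itv /= invr_ge0 ler0n invf_le1 ?ltr0Sn // ler1n.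
- rewrite map_inj_uniq ?iota_uniq // => a b /invr_inj /eqP.
  by rewrite eqr_nat => /eqP [].
- by rewrite size_map size_iota.
Qed.

Lemma integral01_gt0 q :
  q != 0 -> {in `[0, 1], forall t, 0 <= q.[t]} -> 0 < integral01 q.
Proof.
move=> q_neq0 q_ge0.
have Q_mono : {in `[0, 1] &, {homo horner (antideriv q) : s t / s <= t}}.
  apply: ler_hornerW => t t01; rewrite deriv_antideriv q_ge0 //.
  by rewrite in_itv /= !ltW ?(itvP t01).
have in01_0 : (0 : R) \in `[0, 1] by rewrite in_itv /= lexx ler01.
have in01_1 : (1 : R) \in `[0, 1] by rewrite in_itv /= lexx ler01.
rewrite -horner_antideriv1 lt_def -{2}(horner_antideriv0 q) Q_mono // andbT.
apply: contra q_neq0 => /eqP Q1_eq0.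
have Q_eq0 : antideriv q = 0.
  apply: poly_eq0_on01 => t t01; apply/le_anti.
  by rewrite -{1}Q1_eq0 -(horner_antideriv0 q) !Q_mono ?(itvP t01).
by rewrite -(deriv_antideriv q) Q_eq0 deriv0.
Qed.

End Integral01Positive.

Definition poly_of_vect (R : nzRingType) n (x : 'I_n -> R) : {poly R} :=
  \sum_(j < n) x j *: 'X^j.

Lemma coef_poly_of_vect (R : nzRingType) n (x : 'I_n -> R) (j : 'I_n) :
  (poly_of_vect x)`_j = x j.
Proof.
rewrite coef_sum (bigD1 j) //= coefZ coefXn eqxx mulr1 big1 ?addr0 // => k k_neq_j.
by rewrite coefZ coefXn (inj_eq val_inj) eq_sym (negbTE k_neq_j) mulr0.
Qed.

Lemma hilbert_tensor_symmetric (R : numFieldType) m n :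
  symmetric_tensor (@hilbert_tensor R m n).
Proof.
move=> s idx; rewrite /hilbert_tensor [in RHS](reindex_inj (@perm_inj _ s)) /=.
by under eq_bigr do rewrite ffunE.
Qed.

Lemma tensor_apply_weighted (R : numDomainType) m n (A : tensor R m.+1 n) x i :
  tensor_apply A x i =
  \sum_(idx : {ffun 'I_m.+1 -> 'I_n})
     A idx * \prod_(k < m.+1) (if k == ord0 then (idx k == i)%:R else x (idx k)).
Proof.
rewrite /tensor_apply big_mkcond; apply: eq_bigr => idx _ /=.
have -> : [forall k : 'I_m.+1, (val k == 0%N) ==> (idx k == i)] = (idx ord0 == i).
  apply/forallP/eqP => [/(_ ord0) /eqP // | <- k].
  by apply/implyP => /eqP k0; rewrite (_ : k = ord0) //; apply: val_inj.
rewrite [in RHS](bigD1 ord0) //=; case: eqP => _; last by rewrite mul0r mulr0.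
by rewrite mul1r; congr (_ * _); apply: eq_big => // k k_neq0; rewrite ifN.
Qed.

Lemma hilbert_tensor_apply (R : numFieldType) m n (x : 'I_n -> R) i :
  tensor_apply (@hilbert_tensor R m.+1 n) x i =
  integral01 ('X^i * poly_of_vect x ^+ m).
Proof.
pose w (k : 'I_m.+1) (j : 'I_n) := if k == ord0 then (j == i)%:R else x j.
have -> : 'X^i * poly_of_vect x ^+ m = \prod_(k < m.+1) \sum_(j < n) w k j *: 'X^j.
  rewrite big_ord_recl /w /=; congr (_ * _).
    rewrite (bigD1 i) //= eqxx scale1r big1 ?addr0 // => j /negbTE ->.
    by rewrite scale0r.
  by rewrite prodr_const card_ord.
rewrite bigA_distr_bigA integral01_sum tensor_apply_weighted.
apply: eq_bigr => idx _.
by rewrite scaler_prod prodrXr integral01_scaleXn mulrC.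
Qed.

Theorem corollary3p7 (R : realType) (m n : nat) :
  (3 <= m)%N -> odd m -> (2 <= n)%N ->
  symmetric_tensor (@hilbert_tensor R m n) /\
  strongly_positive_definite (@hilbert_tensor R m n).
Proof.
move=> _ m_odd _; split; first exact: hilbert_tensor_symmetric.
case: m m_odd => // m /= m_even x [j xj_neq0] i.
rewrite hilbert_tensor_apply; apply: integral01_gt0.
  rewrite mulf_neq0 ?expf_neq0 ?polyX_eq0 //.
  by apply: contraNneq xj_neq0 => px0; rewrite -coef_poly_of_vect px0 coef0.
move=> t; rewrite in_itv /= => /andP[t_ge0 _].
rewrite hornerM !horner_exp hornerX.
by apply: mulr_ge0; [exact: exprn_ge0 | exact: exprn_even_ge0].
Qed.
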